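(* Let $k\ge1$ and let $a\ge b$ be the dimensions of irreducible algebraic sets $A,B\subset\mathbb{C}^k$; put $m=2k-a-b$. Let $h^*$ and $h_0$ be integers with $b\ge h^*>\dim(A\cap B)$ and $\max(a+b-k,0)\le h_0\le$ the minimum dimension of any irreducible component of $A\cap B$. Let $\mathbb A\in\mathbb{C}^{(a+b)\times k}$, $\mathbf B\in\mathbb{C}^{(a+b)\times k}$, $\mathbf C\in\mathbb{C}^{k\times 2k}$ be generic, set $\mathbf A=[\mathbb A\ \ -\mathbb A]\in\mathbb{C}^{(a+b)\times 2k}$, and for $0\le h\le k$ let $\mathbf Y_h=\mathbf A+\mathbf B\mathbf P_h\mathbf C\in\mathbb{C}^{(a+b)\times 2k}$. Then for any integers $j,i$ with $h_0\le j<i\le h^*$ there exist matrices $E\in\mathbb{C}^{2k\times(m-i+j)}$ and $F,G\in\mathbb{C}^{2k\times(i-j)}$ such that (1) the columns of $[E\ \ F]$ form a basis of the null space of $\mathbf Y_i$; (2) the columns of $[E\ \ G]$ form a basis of the null space of $\mathbf Y_j$; (3) $\mathbf P_{ji}\mathbf C F=\mathbf P_{ji}\mathbf C G$ equals the $k\times(i-j)$ matrix whose rows $j+1,\dots,i$ form the identity matrix $I_{i-j}$ and whose other rows are zero.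
   Context: For $0\le h\le k$, $\mathbf P_h=\mathrm{diag}(1,\dots,1,0,\dots,0)$ is the $k\times k$ diagonal matrix with $h$ ones followed by $k-h$ zeros. For $0\le j\le i\le k$, $\mathbf P_{ji}=\mathrm{diag}(0,\dots,0,1,\dots,1,0,\dots,0)$ is the $k\times k$ diagonal matrix with $j$ zeros, then $i-j$ ones, then $k-i$ zeros (so $\mathbf P_j+\mathbf P_{ji}=\mathbf P_i$). ''Generic'' means for all choices outside a proper algebraic subset of the parameter space (e.g. random complex entries). *)

From HB Require Import structures.
From mathcomp Require Import all_boot all_order all_algebra.
From mathcomp Require Import Rstruct complex.
From mathcomp Require Import mpoly.

Set Implicit Arguments.
Unset Strict Implicit.
Unset Printing Implicit Defensive.

Import GRing.Theory Num.Theory.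
Local Open Scope ring_scope.

Notation CC := (complex Rdefinitions.R).

Definition pt (n : nat) := 'I_n -> CC.
Definition subset_of n (S T : pt n -> Prop) := forall x, S x -> T x.
Definition same_set n (S T : pt n -> Prop) := forall x, S x <-> T x.
Definition strict_subset n (S T : pt n -> Prop) :=
  subset_of S T /\ ~ subset_of T S.
Definition setI_ n (S T : pt n -> Prop) : pt n -> Prop := fun x => S x /\ T x.

Definition zero_set n (P : seq {mpoly CC[n]}) : pt n -> Prop :=
  fun x => forall p, p \in P -> p.@[x] = 0.
Definition algebraic_set n (S : pt n -> Prop) :=
  exists P : seq {mpoly CC[n]}, same_set S (zero_set P).

Definition irreducible_alg n (S : pt n -> Prop) :=
  [/\ algebraic_set S, (exists x, S x) &
      forall S1 S2 : pt n -> Prop, algebraic_set S1 -> algebraic_set S2 ->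
        same_set S (fun x => S1 x \/ S2 x) ->
        same_set S S1 \/ same_set S S2].

Definition has_chain n (S : pt n -> Prop) (d : nat) :=
  exists Z : nat -> pt n -> Prop,
    [/\ forall l, (l <= d)%N -> irreducible_alg (Z l),
        forall l, (l < d)%N -> strict_subset (Z l) (Z l.+1) &
        subset_of (Z d) S].

Definition alg_dim n (S : pt n -> Prop) (d : nat) :=
  has_chain S d /\ ~ has_chain S d.+1.

Definition irr_component n (S W : pt n -> Prop) :=
  [/\ irreducible_alg W, subset_of W S &
      forall W', irreducible_alg W' -> subset_of W W' -> subset_of W' S ->
        subset_of W' W].

(* Genericity for a property of a triple of complex matrices: it holds for
   all parameters outside a proper algebraic subset of the parameter space
   C^(m1 n1 + m2 n2 + m3 n3) (entries listed via mxvec). *)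
Definition params m1 n1 m2 n2 m3 n3
  (X : 'M[CC]_(m1, n1)) (Y : 'M[CC]_(m2, n2)) (Z : 'M[CC]_(m3, n3)) :
  pt (m1 * n1 + m2 * n2 + m3 * n3) :=
  fun t => row_mx (row_mx (mxvec X) (mxvec Y)) (mxvec Z) 0 t.

Definition generic3 m1 n1 m2 n2 m3 n3
  (Q : 'M[CC]_(m1, n1) -> 'M[CC]_(m2, n2) -> 'M[CC]_(m3, n3) -> Prop) :=
  exists Zs : pt (m1 * n1 + m2 * n2 + m3 * n3) -> Prop,
    [/\ algebraic_set Zs, (exists x, ~ Zs x) &
        forall X Y Z, ~ Zs (params X Y Z) -> Q X Y Z].

Definition Pmx (k h : nat) : 'M[CC]_k := diag_mx (\row_(r < k) ((r < h)%N)%:R).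
Definition Pjimx (k j i : nat) : 'M[CC]_k :=
  diag_mx (\row_(r < k) ((j <= r)%N && (r < i)%N)%:R).

Definition boldA p k (AA : 'M[CC]_(p, k)) : 'M[CC]_(p, k + k) := row_mx AA (- AA).
Definition Ymx p k (AA BB : 'M[CC]_(p, k)) (Cm : 'M[CC]_(k, k + k)) (h : nat)
  : 'M[CC]_(p, k + k) := boldA AA + BB *m Pmx k h *m Cm.

(* k x (i-j) matrix whose rows j+1..i (1-based) form I_{i-j}, others zero. *)
Definition Jmx (k j i : nat) : 'M[CC]_(k, i - j) :=
  \matrix_(r < k, c < i - j) ((r : nat) == j + c)%N%:R.

Definition col_basis_of_null p q r (Y : 'M[CC]_(p, q)) (M : 'M[CC]_(q, r)) :=
  [/\ Y *m M = 0,
      forall v : 'cV[CC]_q, Y *m v = 0 -> exists c : 'cV[CC]_r, v = M *m c &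
      forall c : 'cV[CC]_r, M *m c = 0 -> c = 0].

(* Let S be the (i-j) x k matrix selecting the rows j+1..i, so that P_ji = S^T S, the target
   matrix is S^T, and Y_i = Y_j + (B S^T) (S C).  The stacked matrices [Y_i; S C] and [Y_j; S C]
   therefore have the same null space; when both have full row rank, a basis E of it together
   with right inverses F, G of S C on the null spaces of Y_i and Y_j gives bases [E F], [E G],
   and P_ji C F = S^T (S C F) = S^T.
   Full row rank of [Y_h; S C] holds wherever det ([Y_h; S C] R) != 0 for a fixed matrix R, a
   polynomial in the entries of the three parameter matrices.  At one explicit point the rows
   of [Y_h; S C] are, up to an invertible column operation, distinct unit vectors; taking R a
   right inverse there, the product of these determinants over all j <= h <= i is a polynomial
   that does not vanish at that point.  The hypotheses on A and B enter only through
   a + b - k <= h0 <= j < i <= h^* <= b <= a, which gives a + b <= k + j and i <= k. *)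

From HB Require Import structures.
From mathcomp Require Import all_boot all_order all_algebra.
From mathcomp Require Import Rstruct complex.
From mathcomp Require Import mpoly zify.

Set Implicit Arguments.
Unset Strict Implicit.
Unset Printing Implicit Defensive.

Import GRing.Theory Num.Theory.
Local Open Scope ring_scope.

Local Notation evmx x := (map_mx (meval x)).

Lemma col_basis_of_null_exists p n r (M : 'M[CC]_(p, n)) :
  n = (p + r)%N -> row_free M -> exists E : 'M[CC]_(n, r), col_basis_of_null M E.
Proof.
move=> def_n freeM.
have [K defK freeK] : exists2 K : 'M[CC]_(r, n), (K :=: kermx M^T)%MS & row_free K.
  have <- : \rank (kermx M^T) = r by rewrite mxrank_ker mxrank_tr (eqP freeM) def_n addKn.
  by exists (row_base (kermx M^T)); [exact: eq_row_base | exact: row_base_free].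
exists K^T; split.
- by apply: trmx_inj; rewrite trmx_mul trmxK trmx0; apply/sub_kermxP; rewrite defK.
- move=> v Mv; have : (v^T <= K)%MS.
    by rewrite defK; apply/sub_kermxP; rewrite -trmx_mul Mv trmx0.
  by case/submxP => D vD; exists D^T; rewrite -[v]trmxK vD trmx_mul.
- move=> c Kc; apply: trmx_inj; apply/eqP.
  by rewrite trmx0 -(mulmx_free_eq0 _ freeK) -[K]trmxK -trmx_mul Kc trmx0.
Qed.

Lemma row_free_right_inverse (F : fieldType) p q n (Y : 'M[F]_(p, n)) (T : 'M_(q, n)) :
  row_free (col_mx Y T) -> exists H : 'M_(n, q), Y *m H = 0 /\ T *m H = 1%:M.
Proof.
case/row_freeP => R YT_R; exists (R *m col_mx 0 1%:M).
by apply/eq_col_mx; rewrite -mul_col_mx mulmxA YT_R mul1mx.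
Qed.

Lemma col_basis_of_null_mulmx_unit p q r (U : 'M[CC]_p) (Y : 'M_(p, q)) (M : 'M_(q, r)) :
  U \in unitmx -> col_basis_of_null Y M -> col_basis_of_null (U *m Y) M.
Proof.
move=> U_unit [YM0 YM_span YM_free]; split => //; first by rewrite -mulmxA YM0 mulmx0.
move=> v; rewrite -mulmxA => /(congr1 (mulmx (invmx U))).
by rewrite mulKmx // mulmx0; exact: YM_span.
Qed.

Lemma col_basis_of_null_shear p q n r (Y : 'M[CC]_(p, n)) (X : 'M_(p, q)) (T : 'M_(q, n))
    (E : 'M_(n, r)) :
  col_basis_of_null (col_mx Y T) E -> col_basis_of_null (col_mx (Y + X *m T) T) E.
Proof.
have -> : col_mx (Y + X *m T) T = block_mx 1%:M X 0 1%:M *m col_mx Y T.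
  by rewrite mul_block_col !mul1mx mul0mx add0r.
by apply: col_basis_of_null_mulmx_unit; rewrite unitmxE det_ublock !det1 mulr1 unitr1.
Qed.

Lemma col_basis_of_null_extend p q n r (Y : 'M[CC]_(p, n)) (T : 'M_(q, n))
    (E : 'M_(n, r)) (H : 'M_(n, q)) :
  col_basis_of_null (col_mx Y T) E -> Y *m H = 0 -> T *m H = 1%:M ->
  col_basis_of_null Y (row_mx E H).
Proof.
move=> [YT_E E_span E_free] YH TH.
move/eqP: YT_E; rewrite mul_col_mx col_mx_eq0 => /andP[/eqP YE /eqP TE].
split.
- by rewrite mul_mx_row YE YH row_mx0.
- move=> v Yv; pose w := v - H *m (T *m v).
  have [c wc] : exists c, w = E *m c.
    apply: (E_span); rewrite mul_col_mx !mulmxBr !mulmxA YH TH !mul0mx mul1mx.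
    by rewrite Yv !subrr col_mx0.
  by exists (col_mx c (T *m v)); rewrite mul_row_col -wc subrK.
- move=> c; rewrite -[c]vsubmxK mul_row_col => EH_c.
  have c2_0 : dsubmx c = 0.
    have := congr1 (mulmx T) EH_c.
    by rewrite mulmx0 mulmxDr !mulmxA TE TH mul0mx mul1mx add0r.
  move: EH_c; rewrite c2_0 mulmx0 addr0 => /E_free ->.
  by rewrite col_mx0.
Qed.

Lemma null_bases_of_update p q r n (Y : 'M[CC]_(p, n)) (X : 'M_(p, q)) (T : 'M_(q, n)) :
  n = (p + q + r)%N -> row_free (col_mx Y T) -> row_free (col_mx (Y + X *m T) T) ->
  exists (E : 'M_(n, r)) (F G : 'M_(n, q)),
    [/\ col_basis_of_null (Y + X *m T) (row_mx E F), col_basis_of_null Y (row_mx E G),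
        T *m F = 1%:M & T *m G = 1%:M].
Proof.
move=> def_n free_Y free_YXT.
have [E basisE] := col_basis_of_null_exists def_n free_Y.
have [F [YXT_F TF]] := row_free_right_inverse free_YXT.
have [G [YG TG]] := row_free_right_inverse free_Y.
exists E, F, G; split => //.
- exact: col_basis_of_null_extend (col_basis_of_null_shear X basisE) YXT_F TF.
- exact: col_basis_of_null_extend basisE YG TG.
Qed.

Definition sel_mx {R : pzSemiRingType} n j q : 'M[R]_(q, n) :=
  \matrix_(c < q, r < n) ((r : nat) == j + c)%N%:R.

Lemma sum_delta_nat (R : pzSemiRingType) n x (F : nat -> R) :
  \sum_(r < n) (r == x :> nat)%:R * F r = if (x < n)%N then F x else 0.
Proof.
rewrite -(big_ord1_eq +%R F) [RHS]big_mkcond; apply: eq_bigr => r _.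
by rewrite mulr_natl mulrb.
Qed.

Lemma sel_mx_mul_tr (R : pzSemiRingType) n j j' q q' : (j + q <= n)%N ->
  sel_mx n j q *m (sel_mx n j' q')^T
  = \matrix_(c, c') (j + c == j' + c')%N%:R :> 'M[R]_(q, q').
Proof.
move=> le_jq; apply/matrixP => c c'; rewrite !mxE.
under eq_bigr => r _ do rewrite !mxE.
by rewrite (sum_delta_nat _ _ (fun r => (r == j' + c')%N%:R)) (leq_trans _ le_jq) ?ltn_add2l.
Qed.

Lemma row_free_col_sel_mx (F : fieldType) n j q j' q' :
  (j + q <= j')%N -> (j' + q' <= n)%N ->
  row_free (col_mx (sel_mx n j q) (sel_mx n j' q') : 'M[F]_(q + q', n)).
Proof.
move=> le_jq le_jq'; have le_jq_n : (j + q <= n)%N by lia.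
apply/row_freeP; exists (col_mx (sel_mx n j q) (sel_mx n j' q'))^T.
rewrite tr_col_mx mul_col_row !sel_mx_mul_tr //.
rewrite scalar_mx_block; congr block_mx; apply/matrixP => c c'; rewrite !mxE.
all: have := ltn_ord c; have := ltn_ord c'; rewrite ?eqn_add2l // => lt_c' lt_c.
all: by case: eqP => // ?; exfalso; lia.
Qed.

Lemma sel_mx_shift (R : pzSemiRingType) m n j q :
  sel_mx (m + n) (m + j) q = row_mx 0 (sel_mx n j q) :> 'M[R]_(q, m + n).
Proof.
apply/matrixP => c r; rewrite !mxE; case: splitP => r' -> /=; rewrite !mxE //.
  by case: eqP => // r'_eq; have := ltn_ord r'; lia.
by rewrite -addnA eqn_add2l.
Qed.

Lemma Jmx_sel k j i : Jmx k j i = (sel_mx k j (i - j))^T.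
Proof. by apply/matrixP => r c; rewrite !mxE. Qed.

Lemma tr_sel_mx_mul k j i : (sel_mx k j (i - j))^T *m sel_mx k j (i - j) = Pjimx k j i.
Proof.
apply/matrixP => r r'; rewrite !mxE.
under eq_bigr => c _ do rewrite !mxE.
have [le_jr | lt_rj] := leqP j r; last first.
  rewrite mul0rn big1 // => c _.
  by case: eqP => [?|_]; [exfalso; lia | rewrite mul0r].
under eq_bigr => c _ do rewrite -(subnKC le_jr) eqn_add2l eq_sym.
rewrite (sum_delta_nat _ _ (fun c => ((r' : nat) == j + c)%N%:R)) subnKC //.
have -> : (r - j < i - j)%N = (r < i)%N by lia.
by case: (r < i)%N; rewrite ?mul0rn // val_eqE eq_sym.
Qed.

Lemma Pmx_split k j i : (j <= i)%N -> Pmx k i = Pmx k j + Pjimx k j i.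
Proof.
move=> le_ji; apply/matrixP => r c; rewrite !mxE.
case: (r == c :> 'I_k); last by rewrite !mulr0n addr0.
rewrite !mulr1n; case: (ltnP r j) => [lt_rj | _] /=; last by rewrite add0r.
by rewrite (leq_trans lt_rj le_ji) addr0.
Qed.

Lemma Ymx_split p k (AA BB : 'M[CC]_(p, k)) Cm j i : (j <= i)%N ->
  Ymx AA BB Cm i
  = Ymx AA BB Cm j + (BB *m (sel_mx k j (i - j))^T) *m (sel_mx k j (i - j) *m Cm).
Proof.
move=> le_ji.
by rewrite /Ymx (Pmx_split k le_ji) -tr_sel_mx_mul mulmxDr mulmxDl addrA !mulmxA.
Qed.

Definition stacked_Ymx p k (AA BB : 'M[CC]_(p, k)) (Cm : 'M[CC]_(k, k + k)) j i h
  : 'M[CC]_(p + (i - j), k + k) :=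
  col_mx (Ymx AA BB Cm h) (sel_mx k j (i - j) *m Cm).

Lemma null_bases_Ymx p k r (AA BB : 'M[CC]_(p, k)) (Cm : 'M[CC]_(k, k + k)) j i :
  (j <= i)%N -> (k + k = p + (i - j) + r)%N ->
  row_free (stacked_Ymx AA BB Cm j i i) -> row_free (stacked_Ymx AA BB Cm j i j) ->
  exists (E : 'M[CC]_(k + k, r)) (F G : 'M[CC]_(k + k, i - j)),
    [/\ col_basis_of_null (Ymx AA BB Cm i) (row_mx E F),
        col_basis_of_null (Ymx AA BB Cm j) (row_mx E G),
        Pjimx k j i *m Cm *m F = Jmx k j i &
        Pjimx k j i *m Cm *m G = Jmx k j i].
Proof.
move=> le_ji def_n; rewrite /stacked_Ymx (Ymx_split AA BB Cm le_ji) => free_i free_j.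
have [E [F [G [basis_i basis_j SF SG]]]] := null_bases_of_update def_n free_j free_i.
have PJ H : sel_mx k j (i - j) *m Cm *m H = 1%:M -> Pjimx k j i *m Cm *m H = Jmx k j i.
  by move=> SH; rewrite -tr_sel_mx_mul -!mulmxA (mulmxA (sel_mx _ _ _)) SH mulmx1 Jmx_sel.
by exists E, F, G; split; rewrite ?PJ.
Qed.

(* [AA0 BB0] consists of the first p rows of I_2k and C0 = [0 I_k], so that
   Y_h = [AA0, BB0 - AA0] as soon as p <= k + h. *)
Definition AA0 p k : 'M[CC]_(p, k) := lsubmx (sel_mx (k + k) 0 p).
Definition BB0 p k : 'M[CC]_(p, k) := rsubmx (sel_mx (k + k) 0 p).
Definition C0 k : 'M[CC]_(k, k + k) := row_mx 0 1%:M.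

Lemma BB0_Pmx p k h : (p <= k + h)%N -> BB0 p k *m Pmx k h = BB0 p k.
Proof.
move=> le_p; rewrite /Pmx mul_mx_diag; apply/matrixP => r c; rewrite !mxE.
case: eqP => /= [r_eq | _]; last by rewrite mul0r.
by rewrite (_ : (c < h)%N) ?mulr1 //; have := ltn_ord r; lia.
Qed.

Lemma Ymx_witness p k h : (p <= k + h)%N ->
  Ymx (AA0 p k) (BB0 p k) (C0 k) h = row_mx (AA0 p k) (BB0 p k - AA0 p k).
Proof.
move=> le_p; rewrite /Ymx /boldA /C0 mul_mx_row mulmx0 mulmx1 BB0_Pmx //.
by rewrite add_row_mx addr0 addrC.
Qed.

Lemma stacked_Ymx_witness_row_free p k j i h :
  (p <= k + j)%N -> (j <= h)%N -> (j <= i <= k)%N ->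
  row_free (stacked_Ymx (AA0 p k) (BB0 p k) (C0 k) j i h).
Proof.
move=> le_p le_jh /andP[le_ji le_ik].
pose U : 'M[CC]_(k + k) := block_mx 1%:M (- 1%:M) 0 1%:M.
have U_unit : U \in unitmx by rewrite unitmxE det_ublock !det1 mulr1 unitr1.
have -> : stacked_Ymx (AA0 p k) (BB0 p k) (C0 k) j i h
          = col_mx (sel_mx (k + k) 0 p) (sel_mx (k + k) (k + j) (i - j)) *m U.
  rewrite /stacked_Ymx Ymx_witness; last lia.
  rewrite sel_mx_shift -[sel_mx (k + k) 0 p]hsubmxK mul_col_mx !mul_row_block.
  rewrite /C0 mul_mx_row.
  by rewrite !mulmx1 !mulmx0 !mul0mx mulmxN mulmx1 addr0 !add0r addrC.
rewrite /row_free mxrankMfree ?row_free_unit //; apply: row_free_col_sel_mx; lia.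
Qed.

Definition generic_at N (x0 : pt N) (Q : pt N -> Prop) :=
  exists P : {mpoly CC[N]}, P.@[x0] != 0 /\ forall x, P.@[x] != 0 -> Q x.

Lemma generic_at_imply N (x0 : pt N) (C : bool) (Q : pt N -> Prop) :
  (C -> generic_at x0 Q) -> generic_at x0 (fun x => C -> Q x).
Proof.
case: C => [/(_ isT) [P [P0 PQ]] | _]; first by exists P; split=> // x /PQ.
by exists 1; rewrite rmorph1 oner_eq0.
Qed.

Lemma generic_at_forall_leq N (x0 : pt N) s (Q : nat -> pt N -> Prop) :
  (forall t, (t <= s)%N -> generic_at x0 (Q t)) ->
  generic_at x0 (fun x => forall t, (t <= s)%N -> Q t x).
Proof.
move=> genQ.
have /fin_all_exists [P PQ] : forall t : 'I_s.+1, exists P : {mpoly CC[N]},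
    P.@[x0] != 0 /\ forall x, P.@[x] != 0 -> Q t x.
  by move=> t; apply: genQ; rewrite -ltnS.
exists (\prod_t P t); split => [|x]; rewrite rmorph_prod.
  by apply/prodf_neq0 => t _; case: (PQ t).
move=> /prodf_neq0 nzP t le_ts.
by apply: (PQ (Ordinal (le_ts : (t < s.+1)%N))).2; exact: nzP.
Qed.

Lemma evmx_mpolyC N (x : pt N) m n (A : 'M[CC]_(m, n)) :
  evmx x (map_mx (fun c => c%:MP) A) = A.
Proof. by apply/matrixP => r c; rewrite !mxE mevalC. Qed.

Lemma generic_at_row_free N p n (M : 'M[{mpoly CC[N]}]_(p, n)) (M' : pt N -> 'M[CC]_(p, n))
    (x0 : pt N) :
  (forall x, evmx x M = M' x) -> row_free (M' x0) -> generic_at x0 (fun x => row_free (M' x)).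
Proof.
move=> evM /row_freeP[R MR]; exists (\det (M *m map_mx (fun c => c%:MP) R)).
have evP x : (\det (M *m map_mx (fun c => c%:MP) R)).@[x] = \det (M' x *m R).
  by rewrite -det_map_mx map_mxM evmx_mpolyC evM.
split => [|x]; first by rewrite evP MR det1 oner_eq0.
rewrite evP => detMR; apply/row_freeP; exists (R *m invmx (M' x *m R)).
by rewrite mulmxA mulmxV // unitmxE unitfE.
Qed.

Lemma generic_at_stacked_Ymx N p k (AA BB : 'M[{mpoly CC[N]}]_(p, k))
    (Cm : 'M[{mpoly CC[N]}]_(k, k + k)) j i h (x0 : pt N) :
  row_free (stacked_Ymx (evmx x0 AA) (evmx x0 BB) (evmx x0 Cm) j i h) ->
  generic_at x0 (fun x => row_free (stacked_Ymx (evmx x AA) (evmx x BB) (evmx x Cm) j i h)).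
Proof.
apply: (generic_at_row_free (M := col_mx
  (row_mx AA (- AA) + BB *m map_mx (fun c => c%:MP) (Pmx k h) *m Cm)
  (map_mx (fun c => c%:MP) (sel_mx k j (i - j)) *m Cm))) => x.
by rewrite map_col_mx map_mxD map_row_mx map_mxN !map_mxM !evmx_mpolyC.
Qed.

Section ParameterVariables.
Variables m1 n1 m2 n2 m3 n3 : nat.
Local Notation N := (m1 * n1 + m2 * n2 + m3 * n3)%N.

Definition var_row : 'rV[{mpoly CC[N]}]_N := \row_t 'X_t.
Definition varA : 'M[{mpoly CC[N]}]_(m1, n1) := vec_mx (lsubmx (lsubmx var_row)).
Definition varB : 'M[{mpoly CC[N]}]_(m2, n2) := vec_mx (rsubmx (lsubmx var_row)).
Definition varC : 'M[{mpoly CC[N]}]_(m3, n3) := vec_mx (rsubmx var_row).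

Lemma evmx_var_params X Y Z :
  [/\ evmx (params X Y Z) varA = X, evmx (params X Y Z) varB = Y
    & evmx (params X Y Z) varC = Z].
Proof.
by split; apply/matrixP => r c;
  rewrite !mxE mevalXU /params ?row_mxEl ?row_mxEr mxvecE.
Qed.

Lemma generic3_of_generic_at (x0 : pt N)
    (Q : 'M[CC]_(m1, n1) -> 'M[CC]_(m2, n2) -> 'M[CC]_(m3, n3) -> Prop) :
  generic_at x0 (fun x => Q (evmx x varA) (evmx x varB) (evmx x varC)) -> generic3 Q.
Proof.
case=> P [P0 PQ]; exists (fun x => P.@[x] = 0); split.
- by exists [:: P] => x; split => [Px q /[!inE] /eqP -> // | ]; apply; exact: mem_head.
- by exists x0; apply/eqP.
- move=> X Y Z /eqP /PQ.
  by case: (evmx_var_params X Y Z) => -> -> ->.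
Qed.

End ParameterVariables.

Lemma generic3_sub m1 n1 m2 n2 m3 n3
    (Q Q' : 'M[CC]_(m1, n1) -> 'M[CC]_(m2, n2) -> 'M[CC]_(m3, n3) -> Prop) :
  generic3 Q -> (forall X Y Z, Q X Y Z -> Q' X Y Z) -> generic3 Q'.
Proof.
case=> Zs [algZs nontrivial_Zs ZsQ] QQ'.
by exists Zs; split=> // X Y Z /ZsQ /QQ'.
Qed.

Lemma generic_stacked_Ymx_row_free p k h0 : (p <= k + h0)%N ->
  generic3 (fun (AA BB : 'M[CC]_(p, k)) (Cm : 'M[CC]_(k, k + k)) =>
    forall j, (j <= k)%N -> forall i, (i <= k)%N -> forall h, (h <= k)%N ->
      (h0 <= j <= h)%N -> (j <= i)%N -> row_free (stacked_Ymx AA BB Cm j i h)).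
Proof.
move=> le_p.
apply: (@generic3_of_generic_at p k p k k (k + k) (params (AA0 p k) (BB0 p k) (C0 k))).
apply: generic_at_forall_leq => j le_jk; apply: generic_at_forall_leq => i le_ik.
apply: generic_at_forall_leq => h le_hk; apply: generic_at_imply => /andP[le_h0j le_jh].
apply: generic_at_imply => le_ji; apply: generic_at_stacked_Ymx.
case: (evmx_var_params (AA0 p k) (BB0 p k) (C0 k)) => -> -> ->.
by apply: stacked_Ymx_witness_row_free => //; lia.
Qed.

Theorem lemma2p2 (k a b : nat) (A B : pt k -> Prop) (hs h0 : nat) :
  (1 <= k)%N ->
  irreducible_alg A -> irreducible_alg B ->
  alg_dim A a -> alg_dim B b -> (b <= a)%N ->
  (hs <= b)%N ->
  (forall d, has_chain (setI_ A B) d -> (d < hs)%N) ->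
  (a + b - k <= h0)%N ->
  (forall W d, irr_component (setI_ A B) W -> alg_dim W d -> (h0 <= d)%N) ->
  generic3 (fun (AA : 'M[CC]_(a + b, k)) (BB : 'M[CC]_(a + b, k))
                (Cm : 'M[CC]_(k, k + k)) =>
    forall j i : nat, (h0 <= j)%N -> (j < i)%N -> (i <= hs)%N ->
      exists (E : 'M[CC]_(k + k, (k + k - a - b) - (i - j)))
             (F G : 'M[CC]_(k + k, i - j)),
        [/\ col_basis_of_null (Ymx AA BB Cm i) (row_mx E F),
            col_basis_of_null (Ymx AA BB Cm j) (row_mx E G),
            Pjimx k j i *m Cm *m F = Jmx k j i &
            Pjimx k j i *m Cm *m G = Jmx k j i]).
Proof.
move=> _ _ _ _ _ le_ba le_hs_b _ le_h0 _.
have le_ab : (a + b <= k + h0)%N by lia.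
apply: (generic3_sub (generic_stacked_Ymx_row_free le_ab)).
move=> AA BB Cm free_Y j i le_h0j lt_ji le_ihs.
have le_ik : (i <= k)%N by lia.
by apply: null_bases_Ymx; [exact: ltnW | lia | |]; apply: free_Y => //; lia.
Qed.
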